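(* Let $n\ge 2$ and let $G$ be the graph obtained from the complete graph $K_n$ by adding, for each edge $e$ of $K_n$, a new vertex $v_e$ adjacent exactly to the two endpoints of $e$. Then $G$ is well-bicovered.
   Context: All graphs are finite and simple; ''subgraph'' means induced subgraph. A graph is well-bicovered if every vertex-inclusion-maximal induced bipartite subgraph has the same order. *)

From mathcomp Require Import all_boot.
Set Implicit Arguments. Unset Strict Implicit. Unset Printing Implicit Defensive.

(* A finite simple graph: vertex finType T with adjacency relation e,
   assumed symmetric and irreflexive where needed. *)

Definition independent (T : finType) (e : rel T) (S : {set T}) : Prop :=
  forall x y, x \in S -> y \in S -> ~~ e x y.

Definition induces_bipartite (T : finType) (e : rel T) (S : {set T}) : Prop :=
  exists A B : {set T},
    [/\ A :|: B = S, A :&: B = set0, independent e A & independent e B].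

Definition maximal_bipartite (T : finType) (e : rel T) (S : {set T}) : Prop :=
  induces_bipartite e S /\
  forall S' : {set T}, S \subset S' -> induces_bipartite e S' -> S' = S.

Definition well_bicovered (T : finType) (e : rel T) : Prop :=
  forall S1 S2 : {set T}, maximal_bipartite e S1 -> maximal_bipartite e S2 ->
    #|S1| = #|S2|.

Definition Kedge (n : nat) := {p : 'I_n * 'I_n | p.1 < p.2}.

(* Vertices of G: the original vertices of K_n (inl) and one new vertex v_e
   per edge e of K_n (inr). *)
Definition KnSubdivVert (n : nat) : finType := ('I_n + Kedge n)%type.

Definition KnSubdivAdj (n : nat) : rel (KnSubdivVert n) :=
  fun x y =>
    match x, y with
    | inl i, inl j => i != j
    | inl i, inr p => (i == (val p).1) || (i == (val p).2)
    | inr p, inl i => (i == (val p).1) || (i == (val p).2)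
    | inr _, inr _ => false
    end.

From mathcomp Require Import all_boot.
Set Implicit Arguments. Unset Strict Implicit. Unset Printing Implicit Defensive.

(* A maximal induced bipartite set S contains at most two original vertices,
   since three of them form a triangle, and at least one, since a single
   original vertex can always be added.  If S contains two original vertices
   a and b, it cannot contain v_ab (triangle a b v_ab) but contains every
   other new vertex: putting a together with the new vertices not incident to
   a on one side, and b with the new vertices incident to a on the other,
   gives a bipartition.  If S contains only a, the same bipartition shows that
   S contains every new vertex.  Either way |S| = #edges of K_n + 1. *)

Section InducedBipartite.

Variables (T : finType) (e : rel T).

Lemma maximal_bipartite_mem (S : {set T}) v :
  maximal_bipartite e S -> induces_bipartite e (v |: S) -> v \in S.
Proof. by move=> [_ maxS] /(maxS _ (subsetUr _ _)) <-; rewrite setU11. Qed.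

Lemma induces_bipartite_split (S A : {set T}) :
  independent e (S :&: A) -> independent e (S :\: A) -> induces_bipartite e S.
Proof.
move=> indSA indSD; exists (S :&: A), (S :\: A); split => //.
  exact: setID.
by rewrite setDE setIACA setICr setI0.
Qed.

Lemma induces_bipartite_triangle (S : {set T}) x y z :
  induces_bipartite e S -> x \in S -> y \in S -> z \in S ->
  e x y -> e y z -> e x z -> False.
Proof.
move=> [A [B [defS disjAB indA indB]]].
have notA w : w \in B -> w \notin A.
  by move=> wB; apply/negP => wA; move: (in_set0 w); rewrite -disjAB inE wA wB.
have sides u v : u \in S -> v \in S -> e u v -> (u \in A) != (v \in A).
  rewrite -defS !inE => /orP[] uS /orP[] vS euv.
  - by move: (indA _ _ uS vS); rewrite euv.
  - by rewrite uS (negPf (notA _ vS)).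
  - by rewrite vS (negPf (notA _ uS)).
  - by move: (indB _ _ uS vS); rewrite euv.
move=> xS yS zS exy eyz exz.
move: (sides _ _ xS yS exy) (sides _ _ yS zS eyz) (sides _ _ xS zS exz).
by case: (x \in A); case: (y \in A); case: (z \in A).
Qed.

End InducedBipartite.

Lemma card_sum_set (T1 T2 : finType) (S : {set T1 + T2}) :
  #|S| = #|[set i | inl i \in S]| + #|[set j | inr j \in S]|.
Proof.
rewrite -!sum1_card big_sumType /=.
by congr (_ + _); apply: eq_bigl => i; rewrite inE.
Qed.

Section KnSubdiv.

Variable n : nat.

Definition incident (i : 'I_n) (q : Kedge n) : bool :=
  (i == (val q).1) || (i == (val q).2).

Lemma card_incident_both (a b : 'I_n) :
  a != b -> #|[set q : Kedge n | incident a q && incident b q]| = 1.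
Proof.
wlog ltab : a b / a < b.
  move=> wlog_ab neqab; case: (ltngtP a b) => [ltab|ltba|/val_inj eqab].
  - exact: wlog_ab.
  - rewrite (_ : [set q | _] = [set q | incident b q && incident a q]).
      by apply: wlog_ab; rewrite // eq_sym.
    by apply/setP => q; rewrite !inE andbC.
  - by rewrite eqab eqxx in neqab.
move=> _; apply/eqP/cards1P; exists (Sub (a, b) ltab).
apply/setP => -[[i j] /= ltij]; rewrite !inE /incident /=.
apply/idP/eqP => [|[-> ->]]; last by rewrite !eqxx orbT.
case/andP => /orP[]/eqP eai /orP[]/eqP ebj; subst.
- by have := ltab; rewrite ltnn.
- exact: val_inj.
- by have := ltn_trans ltab ltij; rewrite ltnn.
- by have := ltab; rewrite ltnn.
Qed.

(* With [a = b] the second hypothesis is vacuous. *)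
Lemma induces_bipartite_originals_in_pair (a b : 'I_n)
    (S : {set KnSubdivVert n}) :
  (forall i, inl i \in S -> (i == a) || (i == b)) ->
  (forall q, inr q \in S -> incident a q -> incident b q -> a = b) ->
  induces_bipartite (@KnSubdivAdj n) S.
Proof.
move=> origS newS.
pose sideA := [set x : KnSubdivVert n |
  match x with inl i => i == a | inr q => ~~ incident a q end].
apply: (@induces_bipartite_split _ _ _ sideA) => -[i|q] [j|r]; rewrite !inE //=.
- by move=> /andP[_ /eqP->] /andP[_ /eqP->]; rewrite eqxx.
- by move=> /andP[_ /eqP->] /andP[_].
- by move=> /andP[_ aq] /andP[_ /eqP->].
- move=> /andP[ia iS] /andP[ja jS].
  move: (origS _ iS) (origS _ jS); rewrite (negPf ia) (negPf ja) /=.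
  by move=> /eqP-> /eqP->; rewrite eqxx.
- move=> /andP[ia iS] /andP[/negPn ar rS].
  move: (origS _ iS); rewrite (negPf ia) /= => /eqP ib; subst i.
  by apply/negP => br; rewrite (newS _ rS ar br) eqxx in ia.
- move=> /andP[/negPn aq qS] /andP[ja jS].
  move: (origS _ jS); rewrite (negPf ja) /= => /eqP jb; subst j.
  by apply/negP => bq; rewrite (newS _ qS aq bq) eqxx in ja.
Qed.

Section MaximalSet.

Variable S : {set KnSubdivVert n}.
Hypothesis maxS : maximal_bipartite (@KnSubdivAdj n) S.

Let addS v := @maximal_bipartite_mem _ _ S v maxS.

Lemma maximal_bipartite_original : 0 < n -> exists a, inl a \in S.
Proof.
move=> n_gt0; case: (pickP (fun i => inl i \in S)) => [a aS|noO].
  by exists a.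
pose a0 : 'I_n := Ordinal n_gt0.
exists a0; apply/addS.
apply: (induces_bipartite_originals_in_pair (a := a0) (b := a0)) => // i.
by rewrite !inE => /orP[/eqP[->]|]; [rewrite eqxx | rewrite noO].
Qed.

Lemma card_maximal_bipartite_two (a b : 'I_n) :
  inl a \in S -> inl b \in S -> a != b -> #|S| = #|{: Kedge n}|.+1.
Proof.
move=> aS bS ab; have bipS := maxS.1.
have origS i : inl i \in S -> (i == a) || (i == b).
  move=> iS; apply/norP => -[ia ib].
  by apply: (induces_bipartite_triangle bipS aS bS iS) => /=; rewrite // eq_sym.
have notab q : inr q \in S -> ~~ (incident a q && incident b q).
  move=> qS; apply/negP => /andP[aq bq].
  by apply: (induces_bipartite_triangle bipS aS bS qS) => /=.
have O2 : [set i | inl i \in S] = [set a; b].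
  apply/setP => i; rewrite !inE; apply/idP/idP => [/origS //|/orP[]/eqP-> //].
have E_def : [set q | inr q \in S] = ~: [set q | incident a q && incident b q].
  apply/setP => q; rewrite !inE; apply/idP/idP => [/notab //|nq].
  apply/addS/(induces_bipartite_originals_in_pair (a := a) (b := b)) => [i|r].
    by rewrite !inE /= => /origS.
  rewrite !inE /= => /orP[/eqP[->]|/notab rS] ar br.
    by rewrite ar br in nq.
  by rewrite ar br in rS.
have := cardsC [set q : Kedge n | incident a q && incident b q].
by rewrite card_sum_set O2 E_def cards2 ab card_incident_both // => <-.
Qed.

Lemma card_maximal_bipartite_one (a : 'I_n) :
  inl a \in S -> (forall i, inl i \in S -> i = a) -> #|S| = #|{: Kedge n}|.+1.
Proof.
move=> aS onlya.
have O1 : [set i | inl i \in S] = [set a].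
  by apply/setP => i; rewrite !inE; apply/idP/eqP => [/onlya|->].
have ET : [set q | inr q \in S] = setT.
  apply/setP => q; rewrite !inE.
  apply/addS/(induces_bipartite_originals_in_pair (a := a) (b := a)) => [i|//].
  by rewrite !inE /= => /onlya->; rewrite eqxx.
by rewrite card_sum_set O1 ET cards1 cardsT.
Qed.

Lemma card_maximal_bipartite : 0 < n -> #|S| = #|{: Kedge n}|.+1.
Proof.
move=> /maximal_bipartite_original[a aS].
case: (pickP (fun i => (inl i \in S) && (i != a))) => [b /andP[bS ba] | onlya].
  by apply: (card_maximal_bipartite_two aS bS); rewrite eq_sym.
apply: (card_maximal_bipartite_one aS) => i iS.
by apply/eqP; move: (onlya i); rewrite /= iS => /negbFE.
Qed.

End MaximalSet.

End KnSubdiv.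

Theorem mainTheorem13 (n : nat) (hn : 2 <= n) :
  well_bicovered (@KnSubdivAdj n).
Proof.
have n_gt0 : 0 < n by apply: leq_trans hn.
move=> S1 S2 maxS1 maxS2.
rewrite (card_maximal_bipartite maxS1 n_gt0).
by rewrite (card_maximal_bipartite maxS2 n_gt0).
Qed.
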